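(* Fix an integer $d\ge1$ and let $Q$ be a Kazhdan subset of $\mathbb Z^d$, viewed as a subset of $\mathbb R^d$. Then: (1) for every increasing sequence $(W_n)_{n\ge1}$ of subsets of $\mathbb R^d$ with $\bigcup_{n\ge1}W_n=\mathbb R^d$, there exists $n\ge1$ such that $W_n\cup Q$ is a Kazhdan set in $\mathbb R^d$; (2) for every $\delta>0$, $B(0,\delta)\cup Q$ is a Kazhdan set in $\mathbb R^d$, where $B(0,\delta)$ is the open Euclidean ball of radius $\delta$ centered at $0$.
   Context: For a topological group $G$, a subset $Q$ is a Kazhdan set in $G$ if there exists $\varepsilon>0$ such that every strongly continuous unitary representation $\pi$ of $G$ on a complex Hilbert space having a vector $x$ with $\sup_{g\in Q}\|\pi(g)x-x\|<\varepsilon\|x\|$ has a non-zero $G$-invariant vector. $\mathbb Z^d$ is discrete and $\mathbb R^d$ carries its usual topology. *)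

From Stdlib Require Import Reals ZArith.
From Stdlib Require Vectors.Fin.
Open Scope R_scope.

(* ---------- Complex Hilbert spaces ----------
   A complex Hilbert space is encoded as a real Hilbert space (real inner
   product [hinner] = real part of the complex inner product) together with
   an orthogonal complex structure [hJ] (multiplication by i). *)
Record HilbertC : Type := {
  hcar :> Type;
  hzero : hcar;
  hadd : hcar -> hcar -> hcar;
  hopp : hcar -> hcar;
  hscal : R -> hcar -> hcar;
  hJ : hcar -> hcar;
  hinner : hcar -> hcar -> R;
  h_addA : forall x y z, hadd x (hadd y z) = hadd (hadd x y) z;
  h_addC : forall x y, hadd x y = hadd y x;
  h_add0 : forall x, hadd x hzero = x;
  h_addN : forall x, hadd x (hopp x) = hzero;
  h_scal1 : forall x, hscal 1 x = x;
  h_scalA : forall a b x, hscal a (hscal b x) = hscal (a * b) x;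
  h_scalDl : forall a b x, hscal (a + b) x = hadd (hscal a x) (hscal b x);
  h_scalDr : forall a x y, hscal a (hadd x y) = hadd (hscal a x) (hscal a y);
  h_Jadd : forall x y, hJ (hadd x y) = hadd (hJ x) (hJ y);
  h_Jscal : forall a x, hJ (hscal a x) = hscal a (hJ x);
  h_JJ : forall x, hJ (hJ x) = hopp x;
  h_innerC : forall x y, hinner x y = hinner y x;
  h_innerD : forall x y z, hinner (hadd x y) z = hinner x z + hinner y z;
  h_innerZ : forall a x y, hinner (hscal a x) y = a * hinner x y;
  h_innerJ : forall x y, hinner (hJ x) (hJ y) = hinner x y;
  h_inner_ge0 : forall x, 0 <= hinner x x;
  h_inner_eq0 : forall x, hinner x x = 0 -> x = hzero;
  h_complete : forall u : nat -> hcar,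
    (forall e, 0 < e -> exists N, forall m n, (N <= m)%nat -> (N <= n)%nat ->
        sqrt (hinner (hadd (u m) (hopp (u n))) (hadd (u m) (hopp (u n)))) < e) ->
    exists l, forall e, 0 < e -> exists N, forall n, (N <= n)%nat ->
        sqrt (hinner (hadd (u n) (hopp l)) (hadd (u n) (hopp l))) < e
}.

Definition hnorm (H : HilbertC) (x : H) : R := sqrt (hinner H x x).
Definition hsub (H : HilbertC) (x y : H) : H := hadd H x (hopp H y).

Definition unitary (H : HilbertC) (U : H -> H) : Prop :=
  (forall x y, U (hadd H x y) = hadd H (U x) (U y)) /\
  (forall a x, U (hscal H a x) = hscal H a (U x)) /\
  (forall x, U (hJ H x) = hJ H (U x)) /\
  (forall x y, hinner H (U x) (U y) = hinner H x y) /\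
  (forall y, exists x, U x = y).

Definition unitary_rep (G : Type) (gop : G -> G -> G) (ge : G)
  (H : HilbertC) (pi : G -> H -> H) : Prop :=
  (forall g, unitary H (pi g)) /\
  (forall x, pi ge x = x) /\
  (forall g h x, pi (gop g h) x = pi g (pi h x)).

Definition Kazhdan_gen (G : Type) (gop : G -> G -> G) (ge : G)
  (cont : forall H : HilbertC, (G -> H -> H) -> Prop) (Q : G -> Prop) : Prop :=
  exists eps, 0 < eps /\
  forall (H : HilbertC) (pi : G -> H -> H),
    unitary_rep G gop ge H pi -> cont H pi ->
    (exists x : H, exists c, 0 <= c /\ c < eps * hnorm H x /\
        forall g, Q g -> hnorm H (hsub H (pi g x) x) <= c) ->
    exists y : H, y <> hzero H /\ forall g, pi g y = y.

Definition Zd (d : nat) : Type := Fin.t d -> Z.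
Definition Rd (d : nat) : Type := Fin.t d -> R.

Definition Zd_add (d : nat) (u v : Zd d) : Zd d := fun i => (u i + v i)%Z.
Definition Zd_zero (d : nat) : Zd d := fun _ => 0%Z.
Definition Rd_add (d : nat) (u v : Rd d) : Rd d := fun i => u i + v i.
Definition Rd_zero (d : nat) : Rd d := fun _ => 0.
Definition Rd_sub (d : nat) (u v : Rd d) : Rd d := fun i => u i - v i.

Fixpoint sumFin (n : nat) : (Fin.t n -> R) -> R :=
  match n with
  | O => fun _ => 0
  | S m => fun f => f Fin.F1 + sumFin m (fun i => f (Fin.FS i))
  end.

Definition Rd_norm (d : nat) (u : Rd d) : R := sqrt (sumFin d (fun i => u i * u i)).

Definition Zd_to_Rd (d : nat) (z : Zd d) : Rd d := fun i => IZR (z i).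

(* Z^d is discrete: no continuity requirement *)
Definition no_cont (d : nat) (H : HilbertC) (pi : Zd d -> H -> H) : Prop := True.

Definition strongly_continuous (d : nat) (H : HilbertC) (pi : Rd d -> H -> H) : Prop :=
  forall (x : H) (g : Rd d) (e : R), 0 < e -> exists delta, 0 < delta /\
    forall h, Rd_norm d (Rd_sub d h g) < delta ->
      hnorm H (hsub H (pi h x) (pi g x)) < e.

Definition KazhdanZ (d : nat) (Q : Zd d -> Prop) : Prop :=
  Kazhdan_gen (Zd d) (Zd_add d) (Zd_zero d) (no_cont d) Q.

Definition KazhdanR (d : nat) (Q : Rd d -> Prop) : Prop :=
  Kazhdan_gen (Rd d) (Rd_add d) (Rd_zero d) (strongly_continuous d) Q.

Definition union_img (d : nat) (W : Rd d -> Prop) (Q : Zd d -> Prop) : Rd d -> Prop :=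
  fun x => W x \/ exists z, Q z /\ x = Zd_to_Rd d z.

Definition ball0 (d : nat) (delta : R) : Rd d -> Prop := fun x => Rd_norm d x < delta.

(* Let [x] be almost invariant under [Q] and under a small cube, for a unitary
   representation of R^d.  Split [x = x0 + x1] with [x0] fixed by Z^d and [x1]
   orthogonal to the Z^d-fixed vectors.  Since [Q] is a Kazhdan set of Z^d, [x1]
   is small; hence [x0] is still almost invariant under the cube, and as every
   [t] in R^d is an integer vector plus a bounded multiple of a cube element,
   the R^d-orbit of [x0] stays within distance less than [|x0|] of [x0].  The
   point of minimal norm of the closed convex set of vectors having large inner
   product with the whole orbit is then a nonzero invariant vector.
   For (2) the ball contains a cube.  For (1), Baire's theorem gives some [W_n]
   dense in a cube; strong continuity transfers almost invariance from [W_n] to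
   that cube, and a translation brings the cube to the origin. *)

From Stdlib Require Import Reals Lra Lia.
From Stdlib Require Import ProofIrrelevance FunctionalExtensionality ClassicalEpsilon Classical.
Open Scope R_scope.

Arguments hzero {h}.
Arguments hadd {h}.
Arguments hopp {h}.
Arguments hscal {h}.
Arguments hJ {h}.
Arguments hinner {h}.
Arguments hnorm {H}.
Arguments hsub {H}.

Section HilbertAlgebra.
Context {H : HilbertC}.
Implicit Types (a b c x y z : H) (t : R).

Lemma hadd0l x : hadd hzero x = x.
Proof. rewrite h_addC; apply h_add0. Qed.

Lemma haddNl x : hadd (hopp x) x = hzero.
Proof. rewrite h_addC; apply h_addN. Qed.

Lemma haddI a b c : hadd a b = hadd a c -> b = c.
Proof.
  intro E. rewrite <- (hadd0l b), <- (hadd0l c), <- (haddNl a), <- !h_addA, E.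
  reflexivity.
Qed.

Lemma hopp_unique a b : hadd a b = hzero -> b = hopp a.
Proof. intro E. apply (haddI a). rewrite E, h_addN. reflexivity. Qed.

Lemma hoppK a : hopp (hopp a) = a.
Proof. symmetry. apply hopp_unique, haddNl. Qed.

Lemma hopp0 : hopp (@hzero H) = hzero.
Proof. symmetry; apply hopp_unique, h_add0. Qed.

Lemma hsub0 a : hsub a hzero = a.
Proof. unfold hsub. rewrite hopp0. apply h_add0. Qed.

Lemma hoppD a b : hopp (hadd a b) = hadd (hopp a) (hopp b).
Proof.
  symmetry; apply hopp_unique.
  rewrite (h_addC _ (hopp a)), h_addA, <- (h_addA _ a b), h_addN, h_add0, h_addN.
  reflexivity.
Qed.

Lemma haddACA a b c z : hadd (hadd a b) (hadd c z) = hadd (hadd a c) (hadd b z).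
Proof. rewrite <- !h_addA. f_equal. rewrite !h_addA. f_equal. apply h_addC. Qed.

Lemma hsubDD a b c z : hsub (hadd a b) (hadd c z) = hadd (hsub a c) (hsub b z).
Proof. unfold hsub. rewrite hoppD. apply haddACA. Qed.

Lemma hsub_trans a b c : hsub a c = hadd (hsub a b) (hsub b c).
Proof.
  unfold hsub. rewrite <- h_addA, (h_addA _ (hopp b)), haddNl, hadd0l. reflexivity.
Qed.

Lemma hoppB a b : hopp (hsub a b) = hsub b a.
Proof. unfold hsub. rewrite hoppD, hoppK, h_addC. reflexivity. Qed.

Lemma hsubxx a : hsub a a = hzero.
Proof. apply h_addN. Qed.

Lemma hsub_eq0 a b : hsub a b = hzero -> a = b.
Proof. intro E. rewrite <- (hoppK b). apply hopp_unique. rewrite h_addC. exact E. Qed.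

Lemma haddK a b : hsub (hadd a b) b = a.
Proof. unfold hsub. rewrite <- h_addA, h_addN. apply h_add0. Qed.

Lemma haddBK a b : hadd b (hsub a b) = a.
Proof. unfold hsub. rewrite h_addC, <- h_addA, haddNl, h_add0. reflexivity. Qed.

Lemma hsubDr x a b : hsub x (hadd a b) = hsub (hsub x a) b.
Proof. unfold hsub. rewrite hoppD, h_addA. reflexivity. Qed.

Lemma hsubBr x a : hsub x (hsub x a) = a.
Proof. unfold hsub. rewrite hoppD, hoppK, h_addA, h_addN, hadd0l. reflexivity. Qed.

Lemma hsubBA x a b : hsub b (hsub x a) = hsub a (hsub x b).
Proof.
  unfold hsub. rewrite !hoppD, !hoppK, !h_addA, (h_addC _ b), (h_addC _ a).
  rewrite <- !h_addA, (h_addC _ a b). reflexivity.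
Qed.

Lemma hscal0 x : hscal 0 x = hzero.
Proof. apply (haddI (hscal 0 x)). rewrite h_add0, <- h_scalDl, Rplus_0_r. reflexivity. Qed.

Lemma hscalN t x : hscal t (hopp x) = hopp (hscal t x).
Proof.
  apply hopp_unique. rewrite <- h_scalDr, h_addN.
  transitivity (hscal t (hscal 0 (@hzero H))); [rewrite hscal0; reflexivity|].
  rewrite h_scalA, Rmult_0_r. apply hscal0.
Qed.

Lemma hscalB t x y : hscal t (hsub x y) = hsub (hscal t x) (hscal t y).
Proof. unfold hsub. rewrite h_scalDr, hscalN. reflexivity. Qed.

Lemma hscal_half_double x : hscal (/2) (hadd x x) = x.
Proof.
  rewrite <- (h_scal1 _ x) at 1 2. rewrite <- h_scalDl, h_scalA.
  replace (/2 * (1 + 1)) with 1 by field. apply h_scal1.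
Qed.

Lemma hinner0l y : hinner hzero y = 0.
Proof. assert (E := h_innerD _ hzero hzero y). rewrite h_add0 in E. lra. Qed.

Lemma hinnerNl x y : hinner (hopp x) y = - hinner x y.
Proof. assert (E := h_innerD _ x (hopp x) y). rewrite h_addN, hinner0l in E. lra. Qed.

Lemma hinnerDr x y z : hinner x (hadd y z) = hinner x y + hinner x z.
Proof. rewrite !(h_innerC _ x). apply h_innerD. Qed.

Lemma hinnerZr t x y : hinner x (hscal t y) = t * hinner x y.
Proof. rewrite !(h_innerC _ x). apply h_innerZ. Qed.

Lemma hinnerNr x y : hinner x (hopp y) = - hinner x y.
Proof. rewrite !(h_innerC _ x). apply hinnerNl. Qed.

Lemma hinnerBl x y z : hinner (hsub x y) z = hinner x z - hinner y z.
Proof. unfold hsub. rewrite h_innerD, hinnerNl. ring. Qed.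

Lemma hinnerBr x y z : hinner z (hsub x y) = hinner z x - hinner z y.
Proof. unfold hsub. rewrite hinnerDr, hinnerNr. ring. Qed.

Lemma hinnerJl x y : hinner (hJ x) y = - hinner x (hJ y).
Proof. rewrite <- h_innerJ, h_JJ, hinnerNl. reflexivity. Qed.

Lemma hinnerDD x y :
  hinner (hadd x y) (hadd x y) = hinner x x + 2 * hinner x y + hinner y y.
Proof. rewrite !h_innerD, !hinnerDr, (h_innerC _ y x). ring. Qed.

Lemma hinnerBB x y :
  hinner (hsub x y) (hsub x y) = hinner x x - 2 * hinner x y + hinner y y.
Proof. rewrite !hinnerBl, !hinnerBr, (h_innerC _ y x). ring. Qed.

Lemma hparallelogram a b :
  hinner (hsub a b) (hsub a b) = 2 * hinner a a + 2 * hinner b b - hinner (hadd a b) (hadd a b).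
Proof. rewrite hinnerBB, hinnerDD. ring. Qed.

Lemma hnorm_ge0 x : 0 <= hnorm x.
Proof. apply sqrt_pos. Qed.

Lemma hnorm_sq x : hnorm x * hnorm x = hinner x x.
Proof. apply sqrt_sqrt, h_inner_ge0. Qed.

Lemma hnorm0 : hnorm (@hzero H) = 0.
Proof. unfold hnorm. rewrite hinner0l. apply sqrt_0. Qed.

Lemma hnorm_eq0 x : hnorm x = 0 -> x = hzero.
Proof. intro E. apply h_inner_eq0. rewrite <- hnorm_sq, E. ring. Qed.

Lemma hnormN x : hnorm (hopp x) = hnorm x.
Proof. unfold hnorm. rewrite hinnerNl, hinnerNr, Ropp_involutive. reflexivity. Qed.

Lemma hnormZ t x : hnorm (hscal t x) = Rabs t * hnorm x.
Proof.
  unfold hnorm. rewrite h_innerZ, hinnerZr, <- Rmult_assoc, sqrt_mult_alt.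
  - rewrite <- sqrt_Rsqr_abs. reflexivity.
  - apply Rle_0_sqr.
Qed.

Lemma hnorm_subC x y : hnorm (hsub x y) = hnorm (hsub y x).
Proof. rewrite <- hoppB, hnormN. reflexivity. Qed.

Lemma Cauchy_Schwarz x y : Rabs (hinner x y) <= hnorm x * hnorm y.
Proof.
  apply Rsqr_incr_0_var; [|pose proof (hnorm_ge0 x); pose proof (hnorm_ge0 y); nra].
  rewrite Rsqr_mult, <- Rsqr_abs. unfold Rsqr. rewrite !hnorm_sq.
  destruct (Req_dec (hinner y y) 0) as [E|E].
  - apply h_inner_eq0 in E. subst. rewrite (h_innerC _ x), !hinner0l. lra.
  - assert (Py : 0 < hinner y y) by (pose proof (h_inner_ge0 _ y); lra).
    assert (Q := h_inner_ge0 _ (hsub x (hscal (hinner x y / hinner y y) y))).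
    rewrite hinnerBB, h_innerZ, hinnerZr, hinnerZr in Q.
    apply (Rmult_le_compat_r (hinner y y)) in Q; [|lra].
    field_simplify in Q; lra.
Qed.

Lemma hinner_le x y : hinner x y <= hnorm x * hnorm y.
Proof. eapply Rle_trans; [apply Rle_abs | apply Cauchy_Schwarz]. Qed.

Lemma hnorm_triangle x y : hnorm (hadd x y) <= hnorm x + hnorm y.
Proof.
  pose proof (hnorm_ge0 x); pose proof (hnorm_ge0 y).
  apply Rsqr_incr_0_var; [|lra]. unfold Rsqr.
  rewrite hnorm_sq, hinnerDD, <- (hnorm_sq x), <- (hnorm_sq y).
  pose proof (hinner_le x y). nra.
Qed.

Lemma hdist_triangle a b c : hnorm (hsub a c) <= hnorm (hsub a b) + hnorm (hsub b c).
Proof. rewrite (hsub_trans a b c). apply hnorm_triangle. Qed.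

Lemma hnorm_sub_le a b : hnorm (hsub a b) <= hnorm a + hnorm b.
Proof. unfold hsub. rewrite <- (hnormN b). apply hnorm_triangle. Qed.

End HilbertAlgebra.

Lemma exists_nat_gt (A : R) : exists n : nat, A < INR n.
Proof. destruct (INR_archimed 1 A) as [n Hn]; [lra|]. exists n. lra. Qed.

Lemma inv_INR_S_lt e : 0 < e -> exists N : nat, forall n, (N <= n)%nat -> / INR (S n) < e.
Proof.
  intro He. destruct (exists_nat_gt (/ e)) as [N HN]. exists N. intros n Hn.
  assert (HnN : INR N <= INR (S n)) by (apply le_INR; lia).
  assert (Hie : 0 < / e) by (apply Rinv_0_lt_compat, He).
  rewrite <- (Rinv_inv e). apply Rinv_lt_contravar; [apply Rmult_lt_0_compat|]; lra.
Qed.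

Section ClosedConvexSets.
Context {H : HilbertC}.
Implicit Types (a b k l x : H) (K M : H -> Prop).

Definition hlim (u : nat -> H) l : Prop :=
  forall e, 0 < e -> exists N, forall n, (N <= n)%nat -> hnorm (hsub (u n) l) < e.

Definition hclosed K : Prop := forall u l, (forall n, K (u n)) -> hlim u l -> K l.

Definition midconvex K : Prop := forall a b, K a -> K b -> K (hscal (/2) (hadd a b)).

Definition perp M (v : H) : Prop := forall w, M w -> hinner v w = 0.

Lemma hcomplete (u : nat -> H) :
  (forall e, 0 < e -> exists N, forall p q, (N <= p)%nat -> (N <= q)%nat ->
     hnorm (hsub (u p) (u q)) < e) ->
  exists l, hlim u l.
Proof. exact (h_complete H u). Qed.

Lemma hlim_inner u l w : hlim u l ->
  forall e, 0 < e -> exists N, forall n, (N <= n)%nat -> Rabs (hinner (u n) w - hinner l w) < e.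
Proof.
  intros Hl e He. pose proof (hnorm_ge0 w) as Hw.
  destruct (Hl (e / (hnorm w + 1))) as [N HN]; [apply Rdiv_lt_0_compat; lra|].
  exists N; intros n Hn. specialize (HN n Hn).
  assert (Ee : e / (hnorm w + 1) * (hnorm w + 1) = e) by (field; lra).
  rewrite <- hinnerBl. eapply Rle_lt_trans; [apply Cauchy_Schwarz|].
  pose proof (hnorm_ge0 (hsub (u n) l)). nra.
Qed.

Lemma hclosed_inner_ge {I : Type} (v : I -> H) (beta : R) :
  hclosed (fun k => forall i, beta <= hinner k (v i)).
Proof.
  intros u l Hu Hl i. apply Rnot_lt_le; intro C.
  destruct (hlim_inner u l (v i) Hl (beta - hinner l (v i))) as [N HN]; [lra|].
  specialize (HN N (le_n N)). specialize (Hu N i). apply Rabs_def2 in HN. lra.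
Qed.

Lemma hclosed_perp M : hclosed (perp M).
Proof.
  intros u l Hu Hl w Mw. destruct (Req_dec (hinner l w) 0) as [|C]; [assumption|].
  destruct (hlim_inner u l w Hl (Rabs (hinner l w))) as [N HN]; [apply Rabs_pos_lt, C|].
  specialize (HN N (le_n N)). rewrite (Hu N w Mw), Rminus_0_l, Rabs_Ropp in HN. lra.
Qed.

Lemma hnorm_inf K : (exists k, K k) ->
  exists m, 0 <= m /\ (forall k, K k -> m <= hnorm k) /\
    forall e, 0 < e -> exists k, K k /\ hnorm k < m + e.
Proof.
  intros [k1 Hk1].
  set (E := fun r => exists k, K k /\ r = - hnorm k).
  destruct (completeness E) as [s [Hsub Hslub]].
  { exists 0. intros r [k [_ ->]]. pose proof (hnorm_ge0 k). lra. }
  { exists (- hnorm k1). exists k1. auto. }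
  exists (- s). split; [|split].
  - enough (s <= 0) by lra. apply Hslub. intros r [k [_ ->]]. pose proof (hnorm_ge0 k). lra.
  - intros k Hk. enough (- hnorm k <= s) by lra. apply Hsub. exists k. auto.
  - intros e He. apply NNPP. intro C.
    enough (s <= s - e) by lra. apply Hslub. intros r [k [Hk ->]].
    apply Rnot_lt_le. intro Hlt. apply C. exists k. split; [assumption|lra].
Qed.

Lemma midconvex_near_inf K m t a b : midconvex K ->
  0 <= m -> (forall k, K k -> m <= hnorm k) -> 0 <= t ->
  K a -> K b -> hnorm a <= m + t -> hnorm b <= m + t ->
  hinner (hsub a b) (hsub a b) <= 4 * t * (2 * m + t).
Proof.
  intros Hmid Hm0 Hlow Ht Ka Kb Ha Hb.
  assert (Hab : 2 * m <= hnorm (hadd a b)).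
  { pose proof (Hlow _ (Hmid a b Ka Kb)) as E. rewrite hnormZ, Rabs_right in E; lra. }
  rewrite hparallelogram, <- !hnorm_sq.
  pose proof (hnorm_ge0 a); pose proof (hnorm_ge0 b). nra.
Qed.

Lemma midconvex_minimizing_cauchy K m (u : nat -> H) : midconvex K ->
  0 <= m -> (forall k, K k -> m <= hnorm k) ->
  (forall n, K (u n) /\ hnorm (u n) < m + / INR (S n)) ->
  forall e, 0 < e -> exists N, forall p q, (N <= p)%nat -> (N <= q)%nat ->
    hnorm (hsub (u p) (u q)) < e.
Proof.
  intros Hmid Hm0 Hlow Hu e He.
  destruct (exists_nat_gt ((8 * m + 4) / (e * e))) as [N HN].
  exists N. intros p q Hp Hq. set (t := / INR (S N)).
  assert (HSN : 0 < INR (S N)) by (apply lt_0_INR; lia).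
  assert (Ht : INR (S N) * t = 1) by (unfold t; field; lra).
  assert (Ht0 : 0 < t) by (apply Rinv_0_lt_compat; lra).
  assert (Hbig : 8 * m + 4 < e * e * INR (S N)).
  { rewrite S_INR. apply (Rmult_lt_compat_l (e * e)) in HN; [|nra].
    replace (e * e * ((8 * m + 4) / (e * e))) with (8 * m + 4) in HN by (field; nra).
    pose proof (pos_INR N). nra. }
  assert (Hnear : forall j, (N <= j)%nat -> hnorm (u j) <= m + t).
  { intros j Hj. destruct (Hu j) as [_ Hj']. enough (/ INR (S j) <= t) by lra.
    apply Rinv_le_contravar; [lra|]. apply le_INR. lia. }
  pose proof (midconvex_near_inf K m t (u p) (u q) Hmid Hm0 Hlow ltac:(lra)
                (proj1 (Hu p)) (proj1 (Hu q)) (Hnear p Hp) (Hnear q Hq)) as Hpq.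
  assert (Ht1 : t <= 1).
  { unfold t. rewrite <- Rinv_1. apply Rinv_le_contravar; [lra|].
    rewrite S_INR. pose proof (pos_INR N). lra. }
  assert (Hsmall : 4 * t * (2 * m + t) < e * e).
  { apply Rle_lt_trans with (t * (8 * m + 4)); [nra|].
    replace (e * e) with (t * (e * e * INR (S N))) by nra.
    apply Rmult_lt_compat_l; assumption. }
  rewrite <- hnorm_sq in Hpq. pose proof (hnorm_ge0 (hsub (u p) (u q))). nra.
Qed.

Lemma midconvex_min_norm K : (exists k, K k) -> midconvex K -> hclosed K ->
  exists k0, K k0 /\ forall k, K k -> hnorm k0 <= hnorm k.
Proof.
  intros Hne Hmid Hcl.
  destruct (hnorm_inf K Hne) as (m & Hm0 & Hlow & Happ).
  destruct (choice (fun n k => K k /\ hnorm k < m + / INR (S n))) as [u Hu].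
  { intro n. apply Happ, Rinv_0_lt_compat, lt_0_INR; lia. }
  destruct (hcomplete u (midconvex_minimizing_cauchy K m u Hmid Hm0 Hlow Hu)) as [l Hl].
exists l. split; [exact (Hcl u l (fun n => proj1 (Hu n)) Hl)|].
  intros k Hk. apply Rle_trans with m; [|exact (Hlow k Hk)].
  apply Rle_plus_epsilon. intros e He.
  destruct (Hl (e / 2)) as [N1 HN1]; [lra|].
  destruct (inv_INR_S_lt (e / 2)) as [N2 HN2]; [lra|].
  specialize (HN1 (N1 + N2)%nat ltac:(lia)). specialize (HN2 (N1 + N2)%nat ltac:(lia)).
  pose proof (hdist_triangle l (u (N1 + N2)%nat) hzero) as T.
  rewrite !hsub0, hnorm_subC in T.
  pose proof (proj2 (Hu (N1 + N2)%nat)). lra.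
Qed.

Lemma midconvex_min_norm_unique K k0 k : midconvex K ->
  K k0 -> (forall k, K k -> hnorm k0 <= hnorm k) -> K k -> hnorm k <= hnorm k0 -> k = k0.
Proof.
  intros Hmid K0 Hmin Kk Hle.
  pose proof (midconvex_near_inf K (hnorm k0) 0 k k0 Hmid (hnorm_ge0 _) Hmin (Rle_refl 0)
                Kk K0 ltac:(lra) ltac:(lra)) as E.
  apply hsub_eq0, h_inner_eq0. pose proof (h_inner_ge0 _ (hsub k k0)). lra.
Qed.

End ClosedConvexSets.

Lemma linear_coef_eq0 (a b : R) : 0 <= b -> (forall t, 0 <= - 2 * t * a + t * t * b) -> a = 0.
Proof.
  intros Hb Hq. specialize (Hq (a / (b + 1))).
  assert (Hc : 0 < (b + 2) / ((b + 1) * (b + 1))) by (apply Rdiv_lt_0_compat; nra).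
  replace (- 2 * (a / (b + 1)) * a + a / (b + 1) * (a / (b + 1)) * b)
    with (- (a * a) * ((b + 2) / ((b + 1) * (b + 1)))) in Hq by (field; lra).
  assert (a * a <= 0) by nra. nra.
Qed.

Section OrthogonalDecomposition.
Context {H : HilbertC}.
Implicit Types (a b x : H) (M : H -> Prop).

Definition subspace M : Prop :=
  M hzero /\ (forall a b, M a -> M b -> M (hadd a b)) /\ (forall t a, M a -> M (hscal t a)).

(* The residual [x - m] of minimal norm is orthogonal to [M]. *)
Lemma orth_decomp M : subspace M -> hclosed M ->
  forall x, exists m r, M m /\ x = hadd m r /\ perp M r.
Proof.
  intros (M0 & MD & MZ) Mcl x.
  set (K := fun v => exists m, M m /\ v = hsub x m).
  destruct (midconvex_min_norm K) as [r [[m0 [Mm0 ->]] Hmin]].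
  - exists x, hzero. rewrite hsub0. split; [exact M0 | reflexivity].
  - intros a b [m1 [H1 ->]] [m2 [H2 ->]]. exists (hscal (/2) (hadd m1 m2)).
    split; [apply MZ, MD; assumption|].
    rewrite <- hsubDD, hscalB, hscal_half_double. reflexivity.
  - intros u l Hu Hl. destruct (choice (fun n m => M m /\ u n = hsub x m) Hu) as [mm Hmm].
    exists (hsub x l). split; [|symmetry; apply hsubBr].
    apply (Mcl mm); [intro n; apply (proj1 (Hmm n))|].
    intros e He. destruct (Hl e He) as [N HN]. exists N. intros n Hn.
    rewrite hsubBA, <- (proj2 (Hmm n)), hnorm_subC. apply HN, Hn.
  - exists m0, (hsub x m0). split; [|split]; [assumption|symmetry; apply haddBK|].
    intros w Mw. apply (linear_coef_eq0 _ (hinner w w) (h_inner_ge0 _ w)). intro t.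
    assert (Kt : K (hsub (hsub x m0) (hscal t w))).
    { exists (hadd m0 (hscal t w)). split; [apply MD, MZ; assumption|symmetry; apply hsubDr]. }
    pose proof (Hmin _ Kt) as Hle.
    pose proof (Rmult_le_compat _ _ _ _ (hnorm_ge0 _) (hnorm_ge0 _) Hle Hle) as Hsq.
    rewrite !hnorm_sq, (hinnerBB (hsub x m0)), h_innerZ, !hinnerZr in Hsq. lra.
Qed.

End OrthogonalDecomposition.

Section OrthogonalComplement.
Context {H : HilbertC} (M : H -> Prop) (MJ : forall w, M w -> M (hJ w)).

Lemma perp0 : perp M hzero.
Proof. intros w _. apply hinner0l. Qed.

Lemma perpD a b : perp M a -> perp M b -> perp M (hadd a b).
Proof. intros Pa Pb w Mw. rewrite h_innerD, Pa, Pb by exact Mw. ring. Qed.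

Lemma perpN a : perp M a -> perp M (hopp a).
Proof. intros Pa w Mw. rewrite hinnerNl, Pa by exact Mw. ring. Qed.

Lemma perpZ t a : perp M a -> perp M (hscal t a).
Proof. intros Pa w Mw. rewrite h_innerZ, Pa by exact Mw. ring. Qed.

Lemma perpJ a : perp M a -> perp M (hJ a).
Proof. intros Pa w Mw. rewrite hinnerJl, Pa by (apply MJ, Mw). ring. Qed.

Lemma perp_eq (u v : {x : H | perp M x}) : proj1_sig u = proj1_sig v -> u = v.
Proof. apply eq_sig_hprop. intros. apply proof_irrelevance. Qed.

Definition perp_space : HilbertC.
Proof.
  refine (@Build_HilbertC {v : H | perp M v}
    (exist _ hzero perp0)
    (fun a b => exist _ (hadd (proj1_sig a) (proj1_sig b)) (perpD _ _ (proj2_sig a) (proj2_sig b)))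
    (fun a => exist _ (hopp (proj1_sig a)) (perpN _ (proj2_sig a)))
    (fun t a => exist _ (hscal t (proj1_sig a)) (perpZ t _ (proj2_sig a)))
    (fun a => exist _ (hJ (proj1_sig a)) (perpJ _ (proj2_sig a)))
    (fun a b => hinner (proj1_sig a) (proj1_sig b))
    _ _ _ _ _ _ _ _ _ _ _ _ _ _ _ _ _ _);
  try (intros; apply perp_eq; simpl;
       first [apply h_addA | apply h_addC | apply h_add0 | apply h_addN | apply h_scal1
             | apply h_scalA | apply h_scalDl | apply h_scalDr | apply h_Jadd | apply h_Jscal
             | apply h_JJ]);
  try (intros; simpl;
       first [apply h_innerC | apply h_innerD | apply h_innerZ | apply h_innerJ
             | apply h_inner_ge0]).
  - intros x E. apply perp_eq, h_inner_eq0, E.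
  - intros u Hu. destruct (hcomplete (fun n => proj1_sig (u n)) Hu) as [l Hl].
    exists (exist _ l (hclosed_perp M _ l (fun n => proj2_sig (u n)) Hl)). exact Hl.
Defined.

End OrthogonalComplement.

Section Unitary.
Context {H : HilbertC} (U : H -> H) (HU : unitary H U).

Lemma unitary0 : U hzero = hzero.
Proof. apply (haddI (U hzero)). rewrite <- (proj1 HU), !h_add0. reflexivity. Qed.

Lemma unitaryB a b : U (hsub a b) = hsub (U a) (U b).
Proof.
  unfold hsub. rewrite (proj1 HU). f_equal.
  apply hopp_unique. rewrite <- (proj1 HU), h_addN. apply unitary0.
Qed.

Lemma unitary_inner a b : hinner (U a) (U b) = hinner a b.
Proof. apply HU. Qed.

Lemma unitary_hnorm x : hnorm (U x) = hnorm x.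
Proof. unfold hnorm. rewrite unitary_inner. reflexivity. Qed.

Lemma unitary_dist a b : hnorm (hsub (U a) (U b)) = hnorm (hsub a b).
Proof. rewrite <- unitaryB. apply unitary_hnorm. Qed.

End Unitary.

Section Representations.
Context {G : Type} (gop : G -> G -> G) (ge : G) {H : HilbertC} (pi : G -> H -> H).

Definition fixed (w : H) : Prop := forall g, pi g w = w.

Hypothesis Hpi : unitary_rep G gop ge H pi.

Let pi_unitary g : unitary H (pi g) := proj1 Hpi g.

Lemma fixed_subspace : subspace fixed.
Proof.
  split; [|split].
  - intro g. apply unitary0, pi_unitary.
  - intros a b Ha Hb g. rewrite (proj1 (pi_unitary g)), Ha, Hb. reflexivity.
  - intros t a Ha g. rewrite (proj1 (proj2 (pi_unitary g))), Ha. reflexivity.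
Qed.

Lemma fixed_closed : hclosed fixed.
Proof.
  intros u l Hu Hl g. apply hsub_eq0, hnorm_eq0.
  apply Rle_antisym; [|apply hnorm_ge0]. apply Rle_plus_epsilon. intros e He.
  destruct (Hl (e / 2)) as [N HN]; [lra|]. specialize (HN N (le_n N)).
  pose proof (hdist_triangle (pi g l) (pi g (u N)) l) as T.
  rewrite (unitary_dist _ (pi_unitary g)), (Hu N g), (hnorm_subC l) in T. lra.
Qed.

Lemma fixed_J w : fixed w -> fixed (hJ w).
Proof. intros Hw g. rewrite (proj1 (proj2 (proj2 (pi_unitary g)))), Hw. reflexivity. Qed.

Lemma perp_fixed_invariant g v : perp fixed v -> perp fixed (pi g v).
Proof.
  intros Pv w Hw. rewrite <- (Hw g), (unitary_inner _ (pi_unitary g)). apply Pv, Hw.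
Qed.

Definition perp_rep (g : G) (v : perp_space fixed fixed_J) : perp_space fixed fixed_J :=
  exist _ (pi g (proj1_sig v)) (perp_fixed_invariant g _ (proj2_sig v)).

Lemma perp_rep_unitary_rep : unitary_rep G gop ge (perp_space fixed fixed_J) perp_rep.
Proof.
  pose proof Hpi as (Hun & Hid & Hmul).
  split; [|split]; [|intro a; apply perp_eq, Hid | intros g h a; apply perp_eq, Hmul].
  intro g. destruct (Hun g) as (Ua & Uz & UJ & Ui & Us).
  split; [|split; [|split; [|split]]];
    [intros a b; apply perp_eq, Ua | intros t a; apply perp_eq, Uz
    | intro a; apply perp_eq, UJ | intros a b; apply Ui |].
  intros [y Py]. destruct (Us y) as [x <-].
  assert (Px : perp fixed x).
  { intros w Hw. rewrite <- (Ui x w), (Hw g). apply Py, Hw. }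
  exists (exist _ x Px). apply perp_eq. reflexivity.
Qed.

Lemma displacement_hadd g a b :
  hsub (pi g (hadd a b)) (hadd a b) = hadd (hsub (pi g a) a) (hsub (pi g b) b).
Proof. rewrite (proj1 (pi_unitary g)). apply hsubDD. Qed.

Lemma displacement_add_fixed g a b : pi g a = a ->
  hsub (pi g (hadd a b)) (hadd a b) = hsub (pi g b) b.
Proof. intro Ha. rewrite displacement_hadd, Ha, hsubxx. apply hadd0l. Qed.

Lemma displacement_le_add g a b :
  hnorm (hsub (pi g a) a) <= hnorm (hsub (pi g (hadd a b)) (hadd a b)) + 2 * hnorm b.
Proof.
  rewrite displacement_hadd, <- (haddK (hsub (pi g a) a) (hsub (pi g b) b)) at 1.
  eapply Rle_trans; [apply hnorm_sub_le|].
  pose proof (hnorm_sub_le (pi g b) b). rewrite (unitary_hnorm _ (pi_unitary g)) in *. lra.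
Qed.

Lemma displacement_mul g h y :
  hnorm (hsub (pi (gop g h) y) y) <= hnorm (hsub (pi g y) y) + hnorm (hsub (pi h y) y).
Proof.
  rewrite (proj2 (proj2 Hpi)). eapply Rle_trans; [apply (hdist_triangle _ (pi g y))|].
  rewrite (unitary_dist _ (pi_unitary g)). lra.
Qed.

Lemma displacement_ldiv g h t y : gop h t = g ->
  hnorm (hsub (pi t y) y) <= hnorm (hsub (pi g y) y) + hnorm (hsub (pi h y) y).
Proof.
  intros <-. rewrite <- (unitary_dist _ (pi_unitary h)), <- (proj2 (proj2 Hpi)).
  eapply Rle_trans; [apply (hdist_triangle _ y)|]. rewrite (hnorm_subC y). lra.
Qed.

(* [K = {k | beta <= <k, pi s y> for all s}] contains [y], is [pi]-invariant
   and avoids [0], so its unique point of minimal norm is a nonzero fixed vector. *)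
Lemma bounded_orbit_fixed (Hdiv : forall g s, exists t, gop g t = s) y C :
  C < hnorm y -> (forall s, hnorm (hsub (pi s y) y) <= C) ->
  exists k, k <> hzero /\ fixed k.
Proof.
  intros HCy Horb.
  assert (HC0 : 0 <= C).
  { eapply Rle_trans; [apply (hnorm_ge0 (hsub (pi ge y) y)) | apply (Horb ge)]. }
  set (beta := hinner y y - C * C / 2).
  assert (Hbeta : 0 < beta) by (unfold beta; rewrite <- hnorm_sq; nra).
  set (K := fun k => forall s, beta <= hinner k (pi s y)).
  assert (Kmid : midconvex K).
  { intros a b Ka Kb s. rewrite h_innerZ, h_innerD. specialize (Ka s). specialize (Kb s). lra. }
  destruct (midconvex_min_norm K) as [k0 [K0 Hmin]];
    [exists y | exact Kmid | apply hclosed_inner_ge |].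
  { intro s. specialize (Horb s).
    pose proof (hinnerBB (pi s y) y) as E.
    rewrite <- !hnorm_sq, (unitary_hnorm _ (pi_unitary s)) in E.
    pose proof (hnorm_ge0 (hsub (pi s y) y)).
    unfold beta. rewrite (h_innerC _ y (pi s y)), <- (hnorm_sq y). nra. }
  exists k0. split.
  - intros ->. specialize (K0 ge). rewrite hinner0l in K0. lra.
  - intro g. apply (midconvex_min_norm_unique K); [exact Kmid | exact K0 | exact Hmin | |].
    + intro s. destruct (Hdiv g s) as [t <-].
      rewrite (proj2 (proj2 Hpi)), (unitary_inner _ (pi_unitary g)). apply K0.
    + rewrite (unitary_hnorm _ (pi_unitary g)). apply Rle_refl.
Qed.

End Representations.

(* [Kazhdan_gen G gop ge cont Q] unfolds to
   [exists eps, 0 < eps /\ Kazhdan_const G gop ge cont Q eps]. *)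
Definition Kazhdan_const (G : Type) (gop : G -> G -> G) (ge : G)
  (cont : forall H : HilbertC, (G -> H -> H) -> Prop) (Q : G -> Prop) (eps : R) : Prop :=
  forall (H : HilbertC) (pi : G -> H -> H),
    unitary_rep G gop ge H pi -> cont H pi ->
    (exists x : H, exists c, 0 <= c /\ c < eps * hnorm x /\
        forall g, Q g -> hnorm (hsub (pi g x) x) <= c) ->
    exists y : H, y <> hzero /\ forall g, pi g y = y.

(* Apply the definition to the restriction of [pi] to the orthogonal complement
   of the fixed vectors. *)
Lemma Kazhdan_const_perp_fixed {G : Type} (gop : G -> G -> G) (ge : G) (Q : G -> Prop) eps
  (HK : Kazhdan_const G gop ge (fun _ _ => True) Q eps)
  {H : HilbertC} (pi : G -> H -> H) (Hpi : unitary_rep G gop ge H pi) v c :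
  perp (fixed pi) v -> 0 <= c -> (forall q, Q q -> hnorm (hsub (pi q v) v) <= c) ->
  eps * hnorm v <= c.
Proof.
  intros Pv Hc Hq. apply Rnot_lt_le. intro Hlt.
  destruct (HK _ (perp_rep gop ge pi Hpi) (perp_rep_unitary_rep gop ge pi Hpi) I)
    as [[y Py] [Hy0 Hy]].
  - exists (exist _ v Pv), c. split; [exact Hc|]. split; [exact Hlt|]. exact Hq.
  - apply Hy0, perp_eq, h_inner_eq0, Py. intro g.
    exact (f_equal (@proj1_sig _ _) (Hy g)).
Qed.

Section EuclideanSpace.
Variable d : nat.

Definition in_cube (p : Rd d) (r : R) (t : Rd d) : Prop := forall i, Rabs (t i - p i) < r.

Definition nscal (n : nat) (s : Rd d) : Rd d := fun i => INR n * s i.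

Lemma Rd_ldiv (g s : Rd d) : exists t, Rd_add d g t = s.
Proof.
  exists (Rd_sub d s g). apply functional_extensionality. intro i.
  unfold Rd_add, Rd_sub. ring.
Qed.

Lemma Rd_floor_decomp (t : Rd d) : exists z : Zd d, forall i, 0 <= t i - IZR (z i) < 1.
Proof.
  apply (choice (fun i (z : Z) => 0 <= t i - IZR z < 1)). intro i.
  destruct (archimed (t i)) as [A B]. exists (up (t i) - 1)%Z.
  rewrite minus_IZR. simpl. lra.
Qed.

Lemma sumFin_le n (f : Fin.t n -> R) m : (forall i, f i <= m) -> sumFin n f <= INR n * m.
Proof.
  induction n as [|n IH]; intro Hf; simpl sumFin; [simpl; lra|].
  rewrite S_INR. specialize (IH (fun i => f (Fin.FS i)) (fun i => Hf _)).
  specialize (Hf Fin.F1). lra.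
Qed.

Lemma sumFin_lt n (f : Fin.t n -> R) m : (1 <= n)%nat ->
  (forall i, f i < m) -> sumFin n f < INR n * m.
Proof.
  destruct n as [|n]; intros Hn Hf; [lia|]. simpl sumFin. rewrite S_INR.
  pose proof (sumFin_le n (fun i => f (Fin.FS i)) m (fun i => Rlt_le _ _ (Hf _))).
  specialize (Hf Fin.F1). lra.
Qed.

Lemma sumFin_ge0 n (f : Fin.t n -> R) : (forall i, 0 <= f i) -> 0 <= sumFin n f.
Proof.
  induction n as [|n IH]; intro Hf; simpl sumFin; [lra|].
  specialize (IH (fun i => f (Fin.FS i)) (fun i => Hf _)). specialize (Hf Fin.F1). lra.
Qed.

(* [INR d] is a junk divisor for [d = 0], hence the hypothesis [1 <= d]. *)
Lemma cube_in_ball (u : Rd d) delta : (1 <= d)%nat -> 0 < delta ->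
  in_cube (Rd_zero d) (delta / INR d) u -> Rd_norm d u < delta.
Proof.
  intros Hd Hdelta Hu.
  assert (HD : 1 <= INR d) by (apply (le_INR 1); exact Hd).
  set (a := delta / INR d).
  assert (Ha : a * INR d = delta) by (unfold a; field; lra).
  assert (Hsq : forall i, u i * u i < a * a).
  { intro i. specialize (Hu i). unfold Rd_zero in Hu. rewrite Rminus_0_r in Hu.
    apply Rabs_def2 in Hu. fold a in Hu. nra. }
  pose proof (sumFin_lt d _ _ Hd Hsq) as Hsum.
  unfold Rd_norm. rewrite <- (sqrt_square delta) by lra. apply sqrt_lt_1_alt. split.
  - apply sumFin_ge0. intro i. apply Rle_0_sqr.
  - eapply Rlt_le_trans; [exact Hsum|].
    assert (0 < a) by (unfold a; apply Rdiv_lt_0_compat; lra). nra.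
Qed.

End EuclideanSpace.

Section EuclideanRepresentations.
Variables (d : nat) (H : HilbertC) (pi : Rd d -> H -> H).
Hypothesis Hpi : unitary_rep (Rd d) (Rd_add d) (Rd_zero d) H pi.

Definition restrict_Zd (z : Zd d) : H -> H := pi (Zd_to_Rd d z).

Lemma restrict_Zd_rep : unitary_rep (Zd d) (Zd_add d) (Zd_zero d) H restrict_Zd.
Proof.
  destruct Hpi as (Hun & Hid & Hmul). split; [|split].
  - intro z. apply Hun.
  - exact Hid.
  - intros g h x. unfold restrict_Zd. rewrite <- Hmul. f_equal.
    apply functional_extensionality. intro i. apply plus_IZR.
Qed.

Lemma displacement_nscal n s y :
  hnorm (hsub (pi (nscal d n s) y) y) <= INR n * hnorm (hsub (pi s y) y).
Proof.
  induction n as [|n IH].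
  - replace (nscal d 0 s) with (Rd_zero d)
      by (apply functional_extensionality; intro i; unfold nscal, Rd_zero; simpl; ring).
    rewrite (proj1 (proj2 Hpi)), hsubxx, hnorm0. simpl. lra.
  - replace (nscal d (S n) s) with (Rd_add d s (nscal d n s))
      by (apply functional_extensionality; intro i; unfold nscal, Rd_add; rewrite S_INR; ring).
    eapply Rle_trans; [apply (displacement_mul _ _ _ Hpi)|]. rewrite S_INR. lra.
Qed.

(* Every [t] is [K s + z] with [z] integral and [s] in the cube of radius [1/K < r]. *)
Lemma Zd_fixed_displacement_bound (K : nat) r D y :
  0 < r -> / r < INR K -> fixed restrict_Zd y ->
  (forall s, in_cube d (Rd_zero d) r s -> hnorm (hsub (pi s y) y) <= D) ->
  forall t, hnorm (hsub (pi t y) y) <= INR K * D.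
Proof.
  intros Hr HK Hy Hcube t.
  assert (HK0 : 0 < INR K) by (pose proof (Rinv_0_lt_compat r Hr); lra).
  assert (HKr : / INR K < r).
  { rewrite <- (Rinv_inv r). apply Rinv_lt_contravar; [|exact HK].
    apply Rmult_lt_0_compat; [apply Rinv_0_lt_compat|]; lra. }
  destruct (Rd_floor_decomp d t) as [z Hz].
  set (s := fun i => (t i - IZR (z i)) / INR K).
  assert (Ets : t = Rd_add d (nscal d K s) (Zd_to_Rd d z)).
  { apply functional_extensionality. intro i.
    unfold Rd_add, nscal, s, Zd_to_Rd. field. lra. }
  assert (Hs : in_cube d (Rd_zero d) r s).
  { intro i. specialize (Hz i). unfold Rd_zero, s. rewrite Rminus_0_r, Rabs_right.
    - apply Rle_lt_trans with (/ INR K); [|exact HKr].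
      unfold Rdiv. rewrite <- (Rmult_1_l (/ INR K)) at 2.
      apply Rmult_le_compat_r; [left; apply Rinv_0_lt_compat|]; lra.
    - apply Rle_ge, Rmult_le_pos; [|left; apply Rinv_0_lt_compat]; lra. }
  rewrite Ets, (proj2 (proj2 Hpi)). change (pi (Zd_to_Rd d z) y) with (restrict_Zd z y).
  rewrite (Hy z). eapply Rle_trans; [apply displacement_nscal|].
  apply Rmult_le_compat_l; [lra|]. apply Hcube, Hs.
Qed.

End EuclideanRepresentations.

Lemma Kazhdan_Zd_cube d (Q : Zd d -> Prop) eps r :
  0 < eps -> Kazhdan_const (Zd d) (Zd_add d) (Zd_zero d) (fun _ _ => True) Q eps -> 0 < r ->
  exists eps', 0 < eps' /\ forall (H : HilbertC) (pi : Rd d -> H -> H),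
    unitary_rep (Rd d) (Rd_add d) (Rd_zero d) H pi -> forall x c, c < eps' * hnorm x ->
    (forall q, Q q -> hnorm (hsub (pi (Zd_to_Rd d q) x) x) <= c) ->
    (forall s, in_cube d (Rd_zero d) r s -> hnorm (hsub (pi s x) x) <= c) ->
    exists y, y <> hzero /\ fixed pi y.
Proof.
  intros Heps HK Hr. destruct (exists_nat_gt (/ r)) as [K HKr].
  assert (HK0 : 0 <= INR K) by apply pos_INR.
  assert (Hieps : 0 < / eps) by (apply Rinv_0_lt_compat, Heps).
  (* [c * A < |x|] gives [K (c + 2 c / eps) < |x| - c / eps <= |x0|] below. *)
  set (A := INR K * (1 + 2 / eps) + / eps).
  assert (HA : 0 < A) by (unfold A, Rdiv; nra).
  exists (/ A). split; [apply Rinv_0_lt_compat, HA|].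
  intros H pi Hpi x c Hcx HQ Hcube.
  assert (Hc0 : 0 <= c).
  { eapply Rle_trans; [apply (hnorm_ge0 (hsub (pi (Rd_zero d) x) x))|]. apply Hcube.
    intro i. unfold Rd_zero. rewrite Rminus_0_r, Rabs_R0. exact Hr. }
  pose proof (restrict_Zd_rep d H pi Hpi) as HpiZ.
  destruct (orth_decomp _ (fixed_subspace _ _ _ HpiZ) (fixed_closed _ _ _ HpiZ) x)
    as (x0 & x1 & Hx0 & -> & Hx1).
  assert (Hx1c : hnorm x1 <= c / eps).
  { apply (Rmult_le_reg_l eps); [exact Heps|]. replace (eps * (c / eps)) with c by (field; lra).
    apply (Kazhdan_const_perp_fixed _ _ Q eps HK _ HpiZ x1 c Hx1 Hc0).
    intros q Hq. rewrite <- (displacement_add_fixed _ _ _ HpiZ q x0 x1 (Hx0 q)). apply HQ, Hq. }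
  assert (Hx0cube : forall s, in_cube d (Rd_zero d) r s ->
                      hnorm (hsub (pi s x0) x0) <= c + 2 * (c / eps)).
  { intros s Hs. pose proof (displacement_le_add _ _ _ Hpi s x0 x1). specialize (Hcube s Hs).
    lra. }
  apply (bounded_orbit_fixed _ _ _ Hpi (Rd_ldiv d) x0 (INR K * (c + 2 * (c / eps)))).
  - pose proof (hnorm_triangle x0 x1).
    assert (HcA : c * A < hnorm (hadd x0 x1)).
    { apply (Rmult_lt_reg_r (/ A)); [apply Rinv_0_lt_compat, HA|].
      rewrite Rmult_assoc, Rinv_r, Rmult_1_r by lra. lra. }
    replace (c * A) with (INR K * (c + 2 * (c / eps)) + c / eps) in HcA
      by (unfold A; field; lra).
    lra.
  - exact (Zd_fixed_displacement_bound d H pi Hpi K r _ x0 Hr HKr Hx0 Hx0cube).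
Qed.

Lemma Rabs_le_inv x y : Rabs x <= y -> - y <= x <= y.
Proof.
  intro Hx. pose proof (Rle_abs x). pose proof (Rle_abs (- x)). rewrite Rabs_Ropp in *. lra.
Qed.

Lemma nested_intervals (a r : nat -> R) : (forall k, 0 <= r k) ->
  (forall k, Rabs (a (S k) - a k) + r (S k) <= r k) ->
  exists q, forall k, Rabs (q - a k) <= r k.
Proof.
  intros Hr Hnest.
  assert (Hmon : forall k m, (k <= m)%nat -> a k - r k <= a m - r m /\ a m + r m <= a k + r k).
  { intros k m Hkm. induction Hkm as [|m _ IH]; [lra|].
    assert (Hm : Rabs (a (S m) - a m) <= r m - r (S m)) by (specialize (Hnest m); lra).
    apply Rabs_le_inv in Hm. lra. }
  assert (Hlu : forall k j, a k - r k <= a j + r j).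
  { intros k j. destruct (Hmon k (max k j)) as [Hk _]; [lia|].
    destruct (Hmon j (max k j)) as [_ Hj]; [lia|]. specialize (Hr (max k j)). lra. }
  destruct (completeness (fun v => exists k, v = a k - r k)) as [q [Hub Hlub]].
  - exists (a 0%nat + r 0%nat). intros v [k ->]. apply Hlu.
  - exists (a 0%nat - r 0%nat). exists 0%nat. reflexivity.
  - exists q. intro k. apply Rabs_le.
    assert (a k - r k <= q) by (apply Hub; exists k; reflexivity).
    assert (q <= a k + r k) by (apply Hlub; intros v [j ->]; apply Hlu).
    lra.
Qed.

Lemma fin_min n (f : Fin.t n -> R) : (forall i, 0 < f i) -> exists m, 0 < m /\ forall i, m <= f i.
Proof.
  induction n as [|n IH]; intro Hf.
  - exists 1. split; [lra|]. intro i. exact (Fin.case0 (fun i => 1 <= f i) i).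
  - destruct (IH (fun i => f (Fin.FS i)) (fun i => Hf _)) as [m [Hm Hmi]].
    exists (Rmin (f Fin.F1) m). split; [apply Rmin_pos; [apply Hf|exact Hm]|].
    intro i. apply (Fin.caseS' i (fun i => Rmin (f Fin.F1) m <= f i)).
    + apply Rmin_l.
    + intro j. eapply Rle_trans; [apply Rmin_r|apply Hmi].
Qed.

Definition dense_in_cube d (W : Rd d -> Prop) (p : Rd d) (r : R) : Prop :=
  forall t, in_cube d p r t -> forall eta, 0 < eta -> exists w, W w /\ in_cube d t eta w.

Lemma not_dense_subcube d (W : Rd d -> Prop) p r : 0 < r -> ~ dense_in_cube d W p r ->
  exists p' r', 0 < r' /\ (forall i, Rabs (p' i - p i) + r' <= r) /\
    forall w, W w -> exists i, r' < Rabs (w i - p' i).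
Proof.
  intros Hr Hnd.
  assert (Hgap : exists t, in_cube d p r t /\ exists eta, 0 < eta /\
                   forall w, W w -> exists i, eta <= Rabs (w i - t i)).
  { apply NNPP. intro C. apply Hnd. intros t Ht eta Heta. apply NNPP. intro C2.
    apply C. exists t. split; [exact Ht|]. exists eta. split; [exact Heta|].
    intros w Ww. apply NNPP. intro C3. apply C2. exists w. split; [exact Ww|].
    intro i. apply Rnot_le_lt. intro Hi. apply C3. exists i. exact Hi. }
  destruct Hgap as [t [Ht [eta [Heta Hw]]]].
  destruct (fin_min d (fun i => r - Rabs (t i - p i))) as [m [Hm Hmi]].
  { intro i. specialize (Ht i). lra. }
  pose proof (Rmin_pos eta m Heta Hm). pose proof (Rmin_l eta m). pose proof (Rmin_r eta m).
  exists t, (Rmin eta m / 2). split; [lra|]. split.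
  - intro i. specialize (Hmi i). simpl in Hmi. lra.
  - intros w Ww. destruct (Hw w Ww) as [i Hi]. exists i. lra.
Qed.

(* A nested sequence of closed cubes, the [k]-th avoiding [W (S k)], would
   have a common point lying in no [W n]. *)
Lemma baire_cube d (W : nat -> Rd d -> Prop) :
  (forall x, exists n, (1 <= n)%nat /\ W n x) ->
  exists N p r, (1 <= N)%nat /\ 0 < r /\ dense_in_cube d (W N) p r.
Proof.
  intro Hcov. apply NNPP. intro Hno.
  set (shrink := fun k (pr pr' : Rd d * R) => 0 < snd pr -> 0 < snd pr' /\
         (forall i, Rabs (fst pr' i - fst pr i) + snd pr' <= snd pr) /\
         forall w, W (S k) w -> exists i, snd pr' < Rabs (w i - fst pr' i)).
  destruct (choice (fun (kpr : nat * (Rd d * R)) pr' => shrink (fst kpr) (snd kpr) pr'))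
    as [F HF].
  { intros [k [p r]]. destruct (Rlt_dec 0 r) as [Hr|Hr].
    - destruct (not_dense_subcube d (W (S k)) p r Hr) as (p' & r' & Hr' & Hsub & Havoid).
      { intro Hdense. apply Hno. exists (S k), p, r. split; [lia|]. split; assumption. }
      exists (p', r'). intros _. split; [|split]; assumption.
    - exists (p, r). intro Hr'. simpl in Hr'. lra. }
  set (cube := fix cube k := match k with O => (Rd_zero d, 1) | S k => F (k, cube k) end).
  assert (Hpos : forall k, 0 < snd (cube k)).
  { induction k as [|k IH]; [simpl; lra|]. apply (HF (k, cube k) IH). }
  assert (Hq : forall i, exists qi, forall k, Rabs (qi - fst (cube k) i) <= snd (cube k)).
  { intro i. apply nested_intervals; [intro k; left; apply Hpos|].
    intro k. apply (HF (k, cube k) (Hpos k)). }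
  destruct (choice _ Hq) as [q Hqk].
  destruct (Hcov q) as [[|k] [Hn Wq]]; [lia|].
  destruct (HF (k, cube k) (Hpos k)) as (_ & _ & Havoid).
  destruct (Havoid q Wq) as [i Hi]. specialize (Hqk i (S k)).
  change (cube (S k)) with (F (k, cube k)) in Hqk. lra.
Qed.

Lemma displacement_le_on_dense_cube d (Hd : (1 <= d)%nat) (H : HilbertC)
  (pi : Rd d -> H -> H) (Hcont : strongly_continuous d H pi) W p r x c :
  dense_in_cube d W p r -> (forall w, W w -> hnorm (hsub (pi w x) x) <= c) ->
  forall g, in_cube d p r g -> hnorm (hsub (pi g x) x) <= c.
Proof.
  intros Hdense Hw g Hg. apply Rle_plus_epsilon. intros e He.
  destruct (Hcont x g e He) as [delta [Hdelta Hnear]].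
  assert (HD : 0 < INR d) by (apply lt_0_INR; lia).
  destruct (Hdense g Hg (delta / INR d)) as [w [Ww Hwg]]; [apply Rdiv_lt_0_compat; lra|].
  assert (Hball : Rd_norm d (Rd_sub d w g) < delta).
  { apply cube_in_ball; [exact Hd|exact Hdelta|]. intro i.
    unfold Rd_sub, Rd_zero. rewrite Rminus_0_r. apply Hwg. }
  specialize (Hnear w Hball). specialize (Hw w Ww).
  pose proof (hdist_triangle (pi g x) (pi w x) x). rewrite hnorm_subC in Hnear. lra.
Qed.

Lemma Kazhdan_union_dense_cube d (Hd : (1 <= d)%nat) (Q : Zd d -> Prop) (HQ : KazhdanZ d Q)
  (W : Rd d -> Prop) p r : 0 < r -> dense_in_cube d W p r -> KazhdanR d (union_img d W Q).
Proof.
  intros Hr Hdense. destruct HQ as [eps [Heps HK]].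
  destruct (Kazhdan_Zd_cube d Q eps r Heps HK Hr) as [eps' [Heps' Hmain]].
  exists (eps' / 2). split; [lra|].
  intros H pi Hpi Hcont [x [c [Hc0 [Hcx Hdisp]]]].
  assert (HW : forall g, in_cube d p r g -> hnorm (hsub (pi g x) x) <= c).
  { apply (displacement_le_on_dense_cube d Hd H pi Hcont W p r x c Hdense).
    intros w Ww. apply Hdisp. left. exact Ww. }
  apply (Hmain H pi Hpi x (2 * c)).
  - replace (eps' * hnorm x) with (2 * (eps' / 2 * hnorm x)) by field. lra.
  - intros q Hq. enough (hnorm (hsub (pi (Zd_to_Rd d q) x) x) <= c) by lra.
    apply Hdisp. right. exists q. split; [exact Hq|reflexivity].
  - intros s Hs. eapply Rle_trans.
    + apply (displacement_ldiv _ _ _ Hpi (Rd_add d p s) p s). reflexivity.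
    + enough (hnorm (hsub (pi (Rd_add d p s) x) x) <= c /\ hnorm (hsub (pi p x) x) <= c)
        by lra.
      split; apply HW; intro i; unfold Rd_add.
      * replace (p i + s i - p i) with (s i - Rd_zero d i) by (unfold Rd_zero; ring). apply Hs.
      * rewrite Rminus_diag_eq, Rabs_R0 by reflexivity. exact Hr.
Qed.

Lemma ball_dense_cube d (Hd : (1 <= d)%nat) delta : 0 < delta ->
  dense_in_cube d (ball0 d delta) (Rd_zero d) (delta / INR d).
Proof.
  intros Hdelta t Ht eta Heta. exists t. split; [apply cube_in_ball; assumption|].
  intro i. rewrite Rminus_diag_eq, Rabs_R0 by reflexivity. exact Heta.
Qed.

Theorem propositionD (d : nat) (Hd : (1 <= d)%nat) (Q : Zd d -> Prop)
  (HQ : KazhdanZ d Q) :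
  (forall W : nat -> (Rd d -> Prop),
     (forall n, (1 <= n)%nat -> forall x, W n x -> W (S n) x) ->
     (forall x : Rd d, exists n, (1 <= n)%nat /\ W n x) ->
     exists n, (1 <= n)%nat /\ KazhdanR d (union_img d (W n) Q)) /\
  (forall delta : R, 0 < delta -> KazhdanR d (union_img d (ball0 d delta) Q)).
Proof.
  split.
  - intros W _ Hcov. destruct (baire_cube d W Hcov) as (N & p & r & HN & Hr & Hdense).
    exists N. split; [exact HN|]. exact (Kazhdan_union_dense_cube d Hd Q HQ (W N) p r Hr Hdense).
  - intros delta Hdelta.
    apply (Kazhdan_union_dense_cube d Hd Q HQ _ (Rd_zero d) (delta / INR d)).
    + apply Rdiv_lt_0_compat; [exact Hdelta|]. apply lt_0_INR. lia.
    + apply ball_dense_cube; assumption.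
Qed.
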